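(* Let $0\le\theta_1<\theta_2\le\frac{\pi}{2}$ and $d=\lceil\frac{1}{\theta_2-\theta_1}\rceil$. Define the grid point $p=P_1(\theta_1,\theta_2)$ by: (i) if $\theta_2-\theta_1>\frac{\pi}{4}$: $p=(1,1)$; (ii) if $\arctan(\frac12)<\theta_2-\theta_1\le\frac{\pi}{4}$: $p=(1,2)$ if $\theta_1\ge\frac{\pi}{4}$; $p=(1,1)$ if $\arctan(\frac12)\le\theta_1<\frac{\pi}{4}$; $p=(2,1)$ if $\theta_1<\arctan(\frac12)$; (iii) if $\theta_2-\theta_1\le\arctan(\frac12)$: $p=(d,\lfloor\tan(\theta_1)\,d+1\rfloor)$ if $\theta_2\le\frac{\pi}{4}$; $p=(1,1)$ if $\theta_1<\frac{\pi}{4}<\theta_2$; $p=(\lfloor\tan(\frac{\pi}{2}-\theta_2)\,d+1\rfloor,d)$ if $\theta_1\ge\frac{\pi}{4}$. Then the segment $e$ from $(0,0)$ to $p$ satisfies $\theta_1<slope(e)<\theta_2$, and, writing $p=(x,y)$, we have $\max(x,y)\le\frac{\pi}{2}\cdot\frac{1}{\theta_2-\theta_1}$.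
   Context: The slope of a segment from $(0,0)$ to a point $p\neq(0,0)$ is the angle (mod $2\pi$) of the counter-clockwise rotation taking the positive $x$-axis onto the half-line from the origin through $p$. *)

From Stdlib Require Import Reals ZArith.
Open Scope R_scope.

(* floor and ceiling on R (Int_part r = up r - 1 is the floor). *)
Definition floorR (r : R) : Z := Int_part r.
Definition ceilR (r : R) : Z := (- Int_part (- r))%Z.

(* theta is the slope of the segment from (0,0) to p = (x,y) <> (0,0):
   the angle in [0, 2*PI) of the counter-clockwise rotation taking the
   positive x-axis onto the half-line from the origin through p. *)
Definition is_slope (x y theta : R) : Prop :=
  0 <= theta < 2 * PI /\
  cos theta * sqrt (x * x + y * y) = x /\
  sin theta * sqrt (x * x + y * y) = y.

Definition P1 (t1 t2 : R) : Z * Z :=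
  let d := ceilR (/ (t2 - t1)) in
  if Rlt_dec (PI / 4) (t2 - t1) then (1%Z, 1%Z)
  else if Rlt_dec (atan (1 / 2)) (t2 - t1) then
    (if Rle_dec (PI / 4) t1 then (1%Z, 2%Z)
     else if Rle_dec (atan (1 / 2)) t1 then (1%Z, 1%Z)
     else (2%Z, 1%Z))
  else
    (if Rle_dec t2 (PI / 4) then (d, floorR (tan t1 * IZR d + 1))
     else if Rlt_dec t1 (PI / 4) then (1%Z, 1%Z)
     else (floorR (tan (PI / 2 - t2) * IZR d + 1), d)).

(* The slope of a lattice point (x, y) with x, y > 0 is atan (y / x).  For the
   small points (1,1), (1,2), (2,1) this is PI/4, PI/2 - atan (1/2) and
   atan (1/2), and the case conditions place them in the sector thanks to
   PI/8 < atan (1/2) < 1/2.  In case (iii) with theta2 <= PI/4 the point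
   (d, y) has y / d in (tan theta1, tan theta1 + 1/d], and
   1/d <= theta2 - theta1 < tan theta2 - tan theta1 because tan' = 1 + tan^2
   exceeds 1 on (0, PI/2); the bound follows from d < 1/(theta2 - theta1) + 1.
   The case theta1 >= PI/4 is the mirror image under theta |-> PI/2 - theta,
   which swaps the coordinates. *)
From Stdlib Require Import Reals ZArith Lra Lia.
Open Scope R_scope.

Lemma floorR_spec r : IZR (floorR r) <= r < IZR (floorR r) + 1.
Proof. unfold floorR; destruct (base_Int_part r); lra. Qed.

Lemma ceilR_spec r : r <= IZR (ceilR r) < r + 1.
Proof. unfold ceilR; rewrite opp_IZR; destruct (base_Int_part (- r)); lra. Qed.

Lemma derivable_pt_lim_tan x :
  - PI / 2 < x < PI / 2 -> derivable_pt_lim tan x (1 + tan x ^ 2).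
Proof.
intros Hx; apply derive_pt_eq_1 with (derivable_pt_tan x Hx).
apply derive_pt_tan.
Qed.

Lemma tan_sub_gt a b : 0 <= a -> a < b -> b < PI / 2 -> b - a < tan b - tan a.
Proof.
intros Ha Hab Hb.
destruct (MVT_cor2 tan (fun x => 1 + tan x ^ 2) a b Hab) as [c [Hc [Hac Hcb]]].
{ intros c Hc; apply derivable_pt_lim_tan; pose proof PI2_3_2; lra. }
assert (0 < tan c ^ 2 * (b - a))
  by (apply Rmult_lt_0_compat; [apply pow_lt, tan_gt_0|]; lra).
rewrite Hc; lra.
Qed.

Lemma tan_gt_id x : 0 < x < PI / 2 -> x < tan x.
Proof.
intros Hx; pose proof (tan_sub_gt 0 x) as H; rewrite tan_0 in H; lra.
Qed.

Lemma atan_half_lt_half : atan (1 / 2) < 1 / 2.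
Proof.
pose proof PI2_3_2.
rewrite <- (atan_tan (1 / 2)) at 2 by lra.
apply atan_increasing, tan_gt_id; lra.
Qed.

Lemma PI_div_8_lt_atan_half : PI / 8 < atan (1 / 2).
Proof.
pose proof Machin_2_3.
assert (atan (/ 3) < atan (/ 2)) by (apply atan_increasing; lra).
replace (1 / 2) with (/ 2) by field; lra.
Qed.

Lemma atan_div_swap x y : 0 < x -> 0 < y -> atan (y / x) = PI / 2 - atan (x / y).
Proof.
intros Hx Hy; rewrite <- atan_inv by (apply Rdiv_lt_0_compat; lra).
f_equal; field; lra.
Qed.

Lemma is_slope_atan x y : 0 < x -> 0 < y -> is_slope x y (atan (y / x)).
Proof.
intros Hx Hy.
assert (Hnorm : sqrt (x * x + y * y) = x * sqrt (1 + (y / x)²)).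
{ replace (x * x + y * y) with (x² * (1 + (y / x)²)) by (unfold Rsqr; field; lra).
  rewrite sqrt_mult, sqrt_Rsqr by (pose proof (Rle_0_sqr (y / x)); try apply Rle_0_sqr; lra).
  reflexivity. }
assert (0 < sqrt (1 + (y / x)²))
  by (apply sqrt_lt_R0; pose proof (Rle_0_sqr (y / x)); lra).
assert (0 < atan (y / x))
  by (rewrite <- atan_0; apply atan_increasing, Rdiv_lt_0_compat; lra).
destruct (atan_bound (y / x)); pose proof PI2_3_2.
unfold is_slope; rewrite cos_atan, sin_atan, Hnorm.
repeat split; try lra; field; lra.
Qed.

Lemma is_slope_pos_eq_atan x y theta :
  0 < x -> 0 < y -> is_slope x y theta -> theta = atan (y / x).
Proof.
intros Hx Hy [[Htheta0 Htheta2] [Hcos Hsin]].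
set (r := sqrt (x * x + y * y)) in *.
assert (0 < r) by (apply sqrt_lt_R0; nra).
assert (0 < cos theta) by nra.
assert (0 < sin theta) by nra.
assert (Hquad : theta < PI / 2).
{ destruct (Rlt_le_dec theta (PI / 2)) as [|H2]; [easy|].
  destruct (Rle_lt_dec theta (3 * (PI / 2))) as [H3|H3].
  - pose proof (cos_le_0 theta H2 H3); lra.
  - pose proof (sin_le_0 theta ltac:(lra) ltac:(lra)); lra. }
rewrite <- (atan_tan theta) by lra; f_equal.
unfold tan; rewrite <- Hcos, <- Hsin; field; lra.
Qed.

Definition sector_point (p : Z * Z) (t1 t2 : R) : Prop :=
  (IZR (fst p), IZR (snd p)) <> (0, 0) /\
  (exists theta, is_slope (IZR (fst p)) (IZR (snd p)) theta) /\
  (forall theta, is_slope (IZR (fst p)) (IZR (snd p)) theta -> t1 < theta < t2) /\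
  IZR (Z.max (fst p) (snd p)) <= PI / 2 * / (t2 - t1).

Lemma sector_point_of_slope (x y : Z) (t1 t2 : R) :
  t1 < t2 -> (0 < x)%Z -> (0 < y)%Z ->
  t1 < atan (IZR y / IZR x) < t2 ->
  IZR x * (t2 - t1) <= PI / 2 -> IZR y * (t2 - t1) <= PI / 2 ->
  sector_point (x, y) t1 t2.
Proof.
intros H12 Hx Hy Hslope Hxgap Hygap; apply IZR_lt in Hx, Hy.
unfold sector_point; cbn [fst snd].
split; [intros E; injection E; lra|].
split; [eexists; apply is_slope_atan; lra|].
split; [intros theta Htheta; rewrite (is_slope_pos_eq_atan _ _ _ Hx Hy Htheta); easy|].
apply (Rmult_le_reg_r (t2 - t1)); [lra|].
rewrite Rmult_assoc, Rinv_l by lra.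
destruct (Z.max_spec x y) as [[_ ->]|[_ ->]]; lra.
Qed.

Section GridPoint.

Variables s1 s2 : R.
Hypotheses (Hs1 : 0 <= s1) (Hs12 : s1 < s2) (Hs2 : s2 <= PI / 4)
  (Hgap : s2 - s1 <= atan (1 / 2)).

Let d := ceilR (/ (s2 - s1)).
Let y := floorR (tan s1 * IZR d + 1).

Lemma grid_denom_pos : 0 < IZR d.
Proof.
pose proof (ceilR_spec (/ (s2 - s1))); pose proof (Rinv_0_lt_compat (s2 - s1)).
unfold d; lra.
Qed.

Lemma inv_grid_denom_le : / IZR d <= s2 - s1.
Proof.
pose proof (ceilR_spec (/ (s2 - s1))); pose proof grid_denom_pos.
rewrite <- (Rinv_inv (s2 - s1)); apply Rinv_le_contravar.
- apply Rinv_0_lt_compat; lra.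
- unfold d in *; lra.
Qed.

Lemma grid_denom_mul_gap_le : IZR d * (s2 - s1) <= PI / 2.
Proof.
pose proof (ceilR_spec (/ (s2 - s1))) as [_ Hd]; fold d in Hd.
pose proof atan_half_lt_half; pose proof PI2_3_2.
assert (IZR d * (s2 - s1) <= (/ (s2 - s1) + 1) * (s2 - s1))
  by (apply Rmult_le_compat_r; lra).
replace ((/ (s2 - s1) + 1) * (s2 - s1)) with (1 + (s2 - s1)) in * by (field; lra).
lra.
Qed.

Lemma grid_ratio_bounds : tan s1 < IZR y / IZR d < tan s2.
Proof.
pose proof (floorR_spec (tan s1 * IZR d + 1)) as [Hy1 Hy2]; fold y in Hy1, Hy2.
pose proof grid_denom_pos; pose proof inv_grid_denom_le.
pose proof atan_half_lt_half; pose proof PI2_3_2.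
assert (Htan : s2 - s1 < tan s2 - tan s1) by (apply tan_sub_gt; lra).
assert (Hratio : IZR y / IZR d = tan s1 + (IZR y - tan s1 * IZR d) * / IZR d)
  by (field; lra).
assert (0 < / IZR d) by (apply Rinv_0_lt_compat; lra).
rewrite Hratio; split; nra.
Qed.

Lemma grid_num_pos : (0 < y)%Z.
Proof.
pose proof grid_ratio_bounds; pose proof grid_denom_pos.
assert (0 <= tan s1).
{ destruct (Req_dec s1 0) as [->|]; [rewrite tan_0; lra|].
  left; apply tan_gt_0; pose proof PI2_3_2; lra. }
apply lt_IZR; apply (Rmult_lt_reg_r (/ IZR d)); [apply Rinv_0_lt_compat|]; lra.
Qed.

Lemma grid_num_le_denom : (y <= d)%Z.
Proof.
pose proof grid_ratio_bounds; pose proof grid_denom_pos.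
assert (tan s2 <= 1) by (rewrite <- tan_PI4; apply tan_incr_1; pose proof PI2_3_2; lra).
apply le_IZR; apply (Rmult_le_reg_r (/ IZR d)); [apply Rinv_0_lt_compat; lra|].
rewrite Rinv_r by lra; lra.
Qed.

Lemma grid_num_mul_gap_le : IZR y * (s2 - s1) <= PI / 2.
Proof.
pose proof grid_denom_mul_gap_le; pose proof (IZR_le _ _ grid_num_le_denom).
apply Rle_trans with (IZR d * (s2 - s1)); [apply Rmult_le_compat_r|]; lra.
Qed.

Lemma grid_slope_bounds : s1 < atan (IZR y / IZR d) < s2.
Proof.
pose proof grid_ratio_bounds; pose proof PI2_3_2.
rewrite <- (atan_tan s1), <- (atan_tan s2) by lra.
split; apply atan_increasing; lra.
Qed.

Lemma grid_point_sector : sector_point (d, y) s1 s2.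
Proof.
apply sector_point_of_slope; auto using grid_num_pos, grid_slope_bounds,
  grid_denom_mul_gap_le, grid_num_mul_gap_le.
apply lt_IZR, grid_denom_pos.
Qed.

End GridPoint.

Lemma mirror_grid_point_sector t1 t2 :
  PI / 4 <= t1 -> t1 < t2 -> t2 <= PI / 2 -> t2 - t1 <= atan (1 / 2) ->
  let d := ceilR (/ (t2 - t1)) in
  sector_point (floorR (tan (PI / 2 - t2) * IZR d + 1), d) t1 t2.
Proof.
intros Ht1 H12 Ht2 Hgap d; pose proof PI2_3_2.
set (s1 := PI / 2 - t2) in d |- *; set (s2 := PI / 2 - t1).
assert (Hs : s2 - s1 = t2 - t1) by (unfold s1, s2; ring).
assert (Hs1 : 0 <= s1) by (unfold s1; lra).
assert (Hs12 : s1 < s2) by (unfold s1, s2; lra).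
assert (Hs2 : s2 <= PI / 4) by (unfold s2; lra).
rewrite <- Hs in Hgap; unfold d; rewrite <- Hs.
assert (Hx : (0 < floorR (tan s1 * IZR (ceilR (/ (s2 - s1))) + 1))%Z)
  by auto using grid_num_pos.
assert (Hd : 0 < IZR (ceilR (/ (s2 - s1)))) by auto using grid_denom_pos.
apply sector_point_of_slope; rewrite <- ?Hs;
  auto using lt_IZR, grid_num_mul_gap_le, grid_denom_mul_gap_le.
rewrite atan_div_swap by (apply IZR_lt in Hx; lra).
enough (s1 < atan (IZR (floorR (tan s1 * IZR (ceilR (/ (s2 - s1))) + 1))
                   / IZR (ceilR (/ (s2 - s1)))) < s2) by (unfold s1, s2 in *; lra).
auto using grid_slope_bounds.
Qed.

Theorem lemma3 (t1 t2 : R) (h1 : 0 <= t1) (h12 : t1 < t2) (h2 : t2 <= PI / 2) :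
  let p := P1 t1 t2 in
  (IZR (fst p), IZR (snd p)) <> (0, 0) /\
  (exists theta, is_slope (IZR (fst p)) (IZR (snd p)) theta) /\
  (forall theta, is_slope (IZR (fst p)) (IZR (snd p)) theta -> t1 < theta < t2) /\
  IZR (Z.max (fst p) (snd p)) <= PI / 2 * / (t2 - t1).
Proof.
intro p; change (sector_point p t1 t2); unfold p, P1; cbv zeta.
pose proof PI2_3_2; pose proof atan_half_lt_half; pose proof PI_div_8_lt_atan_half.
assert (atan_one : atan (1 / 1) = PI / 4) by (rewrite Rdiv_1_r; exact atan_1).
assert (atan_two : atan (2 / 1) = PI / 2 - atan (1 / 2)) by (apply atan_div_swap; lra).
destruct (Rlt_dec (PI / 4) (t2 - t1)).
{ apply sector_point_of_slope; rewrite ?atan_one; lra || lia. }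
destruct (Rlt_dec (atan (1 / 2)) (t2 - t1)).
{ destruct (Rle_dec (PI / 4) t1); [|destruct (Rle_dec (atan (1 / 2)) t1)];
    apply sector_point_of_slope; rewrite ?atan_one, ?atan_two; lra || lia. }
destruct (Rle_dec t2 (PI / 4)).
{ apply grid_point_sector; lra. }
destruct (Rlt_dec t1 (PI / 4)).
{ apply sector_point_of_slope; rewrite ?atan_one; lra || lia. }
apply mirror_grid_point_sector; lra.
Qed.
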